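(* Let $R$ be a commutative ring. Every $GV$-torsion $R$-module is absolutely $w$-pure.
   Context: All rings are commutative with identity. A $GV$-ideal of $R$ is a finitely generated ideal $J$ of $R$ such that the natural homomorphism $R\to \mathrm{Hom}_R(J,R)$ is an isomorphism; $GV(R)$ denotes the set of $GV$-ideals of $R$. For an $R$-module $M$, $\mathrm{tor}_{GV}(M)=\{x\in M : Jx=0 \text{ for some } J\in GV(R)\}$; $M$ is $GV$-torsion if $\mathrm{tor}_{GV}(M)=M$. An $R$-module $A$ is absolutely $w$-pure if $\mathrm{Ext}^1_R(N,A)$ is a $GV$-torsion $R$-module for every finitely presented $R$-module $N$. *)

From HB Require Import structures.
From mathcomp Require Import all_boot all_order all_algebra.
Set Implicit Arguments. Unset Strict Implicit. Unset Printing Implicit Defensive.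
Import GRing.Theory.
Local Open Scope ring_scope.

Section Defs.
Variable R : comPzRingType.

Definition in_ideal (s : seq R) (x : R) : Prop :=
  exists c : 'I_(size s) -> R, x = \sum_(i < size s) c i * s`_i.

Definition in_span (V : lmodType R) (s : seq V) (x : V) : Prop :=
  exists c : 'I_(size s) -> R, x = \sum_(i < size s) c i *: s`_i.

(* The finitely generated ideal J = (s) is a GV-ideal: the natural map
   R -> Hom_R(J, R), r |-> (x |-> r x), is injective and surjective. *)
Definition GV_ideal (s : seq R) : Prop :=
  (forall r : R, (forall x, in_ideal s x -> r * x = 0) -> r = 0) /\
  (forall f : R -> R,
     (forall x y, in_ideal s x -> in_ideal s y -> f (x + y) = f x + f y) ->
     (forall a x, in_ideal s x -> f (a * x) = a * f x) ->
     exists r : R, forall x, in_ideal s x -> f x = r * x).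

Definition GV_torsion_elt (M : lmodType R) (x : M) : Prop :=
  exists s : seq R, GV_ideal s /\ forall a, in_ideal s a -> a *: x = 0.

Definition GV_torsion (M : lmodType R) : Prop :=
  forall x : M, GV_torsion_elt x.

Definition fin_presentation (N : lmodType R) (n : nat)
    (pi : {linear 'rV[R]_n -> N}) : Prop :=
  (forall y : N, exists x, pi x = y) /\
  exists s : seq 'rV[R]_n, forall x, pi x = 0 <-> in_span s x.

(* Ext^1_R(N, A) computed from the presentation 0 -> K -> R^n -> N -> 0,
   K = ker pi:  Ext^1_R(N,A) = Hom_R(K,A) / image(Hom_R(R^n,A)),
   with r.[g] = [r g].  The class of g : K -> A (given as a function on R^n
   which is R-linear on K) is GV-torsion iff some GV-ideal J satisfies:
   for every a in J, a g extends to an R-linear map R^n -> A. *)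
Definition Ext1_GV_torsion (N : lmodType R) (n : nat)
    (pi : {linear 'rV[R]_n -> N}) (A : lmodType R) : Prop :=
  forall g : 'rV[R]_n -> A,
    (forall x y, pi x = 0 -> pi y = 0 -> g (x + y) = g x + g y) ->
    (forall (r : R) x, pi x = 0 -> g (r *: x) = r *: g x) ->
    exists s : seq R, GV_ideal s /\
      forall a, in_ideal s a ->
        exists h : {linear 'rV[R]_n -> A},
          forall x, pi x = 0 -> h x = a *: g x.

Definition absolutely_w_pure (A : lmodType R) : Prop :=
  forall (N : lmodType R) (n : nat) (pi : {linear 'rV[R]_n -> N}),
    fin_presentation pi -> Ext1_GV_torsion pi A.

End Defs.

From HB Require Import structures.
From mathcomp Require Import all_boot all_order all_algebra.
From Stdlib Require Import ClassicalEpsilon.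
Set Implicit Arguments. Unset Strict Implicit. Unset Printing Implicit Defensive.
Import GRing.Theory.
Local Open Scope ring_scope.

(* Let K = ker(R^n -> N) be generated by k_1, ..., k_m and let g : K -> A be
   R-linear.  Each g(k_i) is killed by a GV-ideal J_i, and a finite product of
   GV-ideals is again a GV-ideal, so J = J_1 ... J_m kills g(K).  Hence for
   a in J the map a g vanishes on K and extends (by zero) to R^n, i.e. J kills
   the class of g in Ext^1(N, A). *)

Section Spans.
Variables (R : comPzRingType) (V : lmodType R).
Implicit Types (s : seq V) (x y : V).

Lemma in_span_ind s (P : V -> Prop) :
  P 0 -> (forall x y, P x -> P y -> P (x + y)) ->
  (forall r x, P x -> P (r *: x)) -> (forall v, v \in s -> P v) ->
  forall x, in_span s x -> P x.
Proof.
move=> P0 PD PZ Ps x [c ->].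
by apply: (big_ind P) => // i _; apply/PZ/Ps/mem_nth.
Qed.

Lemma in_span0 s : in_span s 0.
Proof. by exists (fun=> 0); rewrite big1 // => i _; rewrite scale0r. Qed.

Lemma in_spanD s x y : in_span s x -> in_span s y -> in_span s (x + y).
Proof.
move=> [c ->] [d ->]; exists (fun i => c i + d i).
by rewrite -big_split; apply: eq_bigr => i _; rewrite scalerDl.
Qed.

Lemma in_spanZ s r x : in_span s x -> in_span s (r *: x).
Proof.
move=> [c ->]; exists (fun i => r * c i).
by rewrite scaler_sumr; apply: eq_bigr => i _; rewrite scalerA.
Qed.

Lemma mem_in_span s v : v \in s -> in_span s v.
Proof.
case/(nthP 0) => i lt_i_s <-; exists (fun j => (j == Ordinal lt_i_s)%:R).
rewrite (bigD1 (Ordinal lt_i_s)) //= eqxx scale1r big1 ?addr0 // => j /negbTE->.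
by rewrite scale0r.
Qed.

Lemma scale_eq0_on_span (W : lmodType R) s (g : V -> W) (a : R) :
  (forall x y, in_span s x -> in_span s y -> g (x + y) = g x + g y) ->
  (forall r x, in_span s x -> g (r *: x) = r *: g x) ->
  (forall v, v \in s -> a *: g v = 0) ->
  forall x, in_span s x -> a *: g x = 0.
Proof.
move=> gD gZ gs x sx.
suff [] : in_span s x /\ a *: g x = 0 by [].
move: x sx; apply: in_span_ind.
- split; first exact: in_span0.
  by rewrite -(scale0r (0 : V)) gZ ?scale0r ?scaler0 //; apply: in_span0.
- move=> x y [sx gx] [sy gy]; split; first exact: in_spanD.
  by rewrite gD // scalerDr gx gy addr0.
- move=> r x [sx gx]; split; first exact: in_spanZ.
  by rewrite gZ // scalerA mulrC -scalerA gx scaler0.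
by move=> v sv; split; [apply: mem_in_span | apply: gs].
Qed.

End Spans.

Section Ideals.
Variable R : comPzRingType.
Implicit Types (s : seq R) (x y r a : R).

(* Ideals of R are the submodules of the regular module R^o. *)
Lemma in_ideal_ind s (P : R -> Prop) :
  P 0 -> (forall x y, P x -> P y -> P (x + y)) ->
  (forall r x, P x -> P (r * x)) -> (forall a, a \in s -> P a) ->
  forall x, in_ideal s x -> P x.
Proof. exact: (@in_span_ind R R^o). Qed.

Lemma in_ideal0 s : in_ideal s 0.
Proof. exact: (@in_span0 R R^o). Qed.

Lemma in_idealD s x y : in_ideal s x -> in_ideal s y -> in_ideal s (x + y).
Proof. exact: (@in_spanD R R^o). Qed.

Lemma in_idealMl s r x : in_ideal s x -> in_ideal s (r * x).
Proof. exact: (@in_spanZ R R^o). Qed.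

Lemma mem_in_ideal s a : a \in s -> in_ideal s a.
Proof. exact: (@mem_in_span R R^o). Qed.

Lemma ideal_hom_eq_mul s (f : R -> R) r :
  (forall x y, in_ideal s x -> in_ideal s y -> f (x + y) = f x + f y) ->
  (forall a x, in_ideal s x -> f (a * x) = a * f x) ->
  (forall a, a \in s -> f a = r * a) ->
  forall x, in_ideal s x -> f x = r * x.
Proof.
move=> fD fM fs x sx.
suff [] : in_ideal s x /\ f x = r * x by [].
move: x sx; apply: in_ideal_ind.
- split; first exact: in_ideal0.
  by rewrite -(mul0r 0) fM ?mul0r ?mulr0 //; apply: in_ideal0.
- move=> x y [sx fx] [sy fy]; split; first exact: in_idealD.
  by rewrite fD // fx fy mulrDr.
- move=> a x [sx fx]; split; first exact: in_idealMl.
  by rewrite fM // fx mulrCA.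
by move=> a sa; split; [apply: mem_in_ideal | apply: fs].
Qed.

Definition ideal_prod s1 s2 := [seq x * y | x <- s1, y <- s2].

Lemma in_ideal_prodM s1 s2 x y :
  in_ideal s1 x -> in_ideal s2 y -> in_ideal (ideal_prod s1 s2) (x * y).
Proof.
move=> s1x; move: x s1x y; apply: in_ideal_ind.
- by move=> y _; rewrite mul0r; apply: in_ideal0.
- by move=> x x' Hx Hx' y s2y; rewrite mulrDl; apply: in_idealD; auto.
- by move=> r x Hx y s2y; rewrite -mulrA; apply: in_idealMl; auto.
move=> a s1a; apply: in_ideal_ind.
- by rewrite mulr0; apply: in_ideal0.
- by move=> y y' Hy Hy'; rewrite mulrDr; apply: in_idealD.
- by move=> r y Hy; rewrite mulrCA; apply: in_idealMl.
by move=> b s2b; apply/mem_in_ideal/allpairs_f.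
Qed.

Lemma in_ideal_prodl s1 s2 z : in_ideal (ideal_prod s1 s2) z -> in_ideal s1 z.
Proof.
apply: in_ideal_ind; [exact: in_ideal0 | exact: in_idealD | exact: in_idealMl |].
move=> _ /allpairsP[[u v] [/= s1u _ ->]].
by rewrite mulrC; apply/in_idealMl/mem_in_ideal.
Qed.

Lemma in_ideal_prodr s1 s2 z : in_ideal (ideal_prod s1 s2) z -> in_ideal s2 z.
Proof.
apply: in_ideal_ind; [exact: in_ideal0 | exact: in_idealD | exact: in_idealMl |].
by move=> _ /allpairsP[[u v] [/= _ s2v ->]]; apply/in_idealMl/mem_in_ideal.
Qed.

End Ideals.

Section GVIdeals.
Variable R : comPzRingType.
Implicit Types (s : seq R) (x y r a : R).

Lemma GV_ideal_mul_inj s r r' :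
  GV_ideal s -> (forall x, in_ideal s x -> r * x = r' * x) -> r = r'.
Proof.
move=> [inj _] eq_rr'; apply/eqP; rewrite -subr_eq0; apply/eqP/inj => x sx.
by rewrite mulrBl eq_rr' // subrr.
Qed.

Lemma GV_ideal1 : GV_ideal [:: 1 : R].
Proof.
have s1 : in_ideal [:: 1 : R] 1 by apply: mem_in_ideal; rewrite inE.
split; first by move=> r r1; rewrite -(mulr1 r); apply: r1.
by move=> f _ fM; exists (f 1) => x _; rewrite -{1}(mulr1 x) fM // mulrC.
Qed.

(* The homomorphism f : J1 J2 -> R first yields, for fixed y in J2, a
   multiplier F y for x |-> f (x y) on J1; then y |-> F y is itself a
   homomorphism J2 -> R, hence multiplication by some r. *)
Lemma GV_ideal_prod_hom_mul s1 s2 (f : R -> R) :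
  GV_ideal s1 -> GV_ideal s2 ->
  (forall x y, in_ideal (ideal_prod s1 s2) x -> in_ideal (ideal_prod s1 s2) y ->
     f (x + y) = f x + f y) ->
  (forall a x, in_ideal (ideal_prod s1 s2) x -> f (a * x) = a * f x) ->
  exists r, forall x y, in_ideal s1 x -> in_ideal s2 y -> f (x * y) = r * (x * y).
Proof.
move=> GV1 GV2 fD fM.
have F_ex y : in_ideal s2 y ->
    exists r, forall x, in_ideal s1 x -> f (x * y) = r * x.
  move=> s2y; apply: GV1.2 => [x x' s1x s1x' | a x s1x].
    by rewrite mulrDl fD //; apply: in_ideal_prodM.
  by rewrite -mulrA fM //; apply: in_ideal_prodM.
pose F y := epsilon (inhabits 0)
  (fun r => forall x, in_ideal s1 x -> f (x * y) = r * x).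
have FP y : in_ideal s2 y -> forall x, in_ideal s1 x -> f (x * y) = F y * x.
  by move=> s2y; apply: (epsilon_spec (inhabits 0) _ (F_ex y s2y)).
have [r Fr] : exists r, forall y, in_ideal s2 y -> F y = r * y.
  apply: GV2.2 => [y y' s2y s2y' | a y s2y]; apply: (GV_ideal_mul_inj GV1) => x s1x.
    rewrite -(FP _ (in_idealD s2y s2y')) // mulrDr.
    by rewrite fD ?FP ?mulrDl //; apply: in_ideal_prodM.
  rewrite -(FP _ (in_idealMl a s2y)) // mulrCA fM; last exact: in_ideal_prodM.
  by rewrite FP // mulrA.
by exists r => x y s1x s2y; rewrite FP // Fr // mulrAC mulrA.
Qed.

Lemma GV_ideal_prod s1 s2 :
  GV_ideal s1 -> GV_ideal s2 -> GV_ideal (ideal_prod s1 s2).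
Proof.
move=> GV1 GV2; split.
  move=> r r0; apply: GV2.1 => y s2y; apply: GV1.1 => x s1x.
  by rewrite mulrAC -mulrA r0 //; apply: in_ideal_prodM.
move=> f fD fM; have [r fr] := GV_ideal_prod_hom_mul GV1 GV2 fD fM.
exists r; apply: ideal_hom_eq_mul => // _ /allpairsP[[u v] [/= s1u s2v ->]].
by apply: fr; apply: mem_in_ideal.
Qed.

Lemma GV_torsion_seq (A : lmodType R) (vs : seq A) :
  GV_torsion A -> exists s, GV_ideal s /\
    forall a, in_ideal s a -> forall v, v \in vs -> a *: v = 0.
Proof.
move=> torA; elim: vs => [|v vs [s [GVs svs]]].
  by exists [:: 1]; split; [exact: GV_ideal1 | by []].
have [t [GVt tv]] := torA v.
exists (ideal_prod t s); split; first exact: GV_ideal_prod.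
move=> a tsa w; rewrite inE => /predU1P[-> | vs_w].
  by apply: tv; apply: in_ideal_prodl tsa.
by apply: svs vs_w; apply: in_ideal_prodr tsa.
Qed.

End GVIdeals.

Theorem lemma2p3 (R : comPzRingType) (A : lmodType R) :
  GV_torsion A -> absolutely_w_pure A.
Proof.
move=> torA N n pi [_ [ks kerP]] g gD gZ.
have [s [GVs s_ann]] := GV_torsion_seq [seq g k | k <- ks] torA.
exists s; split=> // a sa; exists \0 => x /kerP ks_x /=.
apply/esym/(scale_eq0_on_span (s := ks)) => //.
- by move=> u v /kerP ? /kerP ?; apply: gD.
- by move=> r u /kerP ?; apply: gZ.
- by move=> v ks_v; apply: s_ann => //; apply: map_f.
Qed.
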